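(* Let $n\ge 1$ be odd and let $\mathbb{P}^n=\mathrm{Proj}\,\mathbb{F}_q[x_0,\dots,x_n]$. Set $$g=\sum_{\substack{0\le i\le n-1\\ i \text{ even}}}\left(x_i^qx_{i+1}-x_ix_{i+1}^q\right).$$ Then $V(g)\subset\mathbb{P}^n$ is a smooth hypersurface of degree $q+1$ with $V(g)(\mathbb{F}_q)=\mathbb{P}^n(\mathbb{F}_q)$; moreover, if $n\ge 3$, $V(g)$ is geometrically irreducible.
   Context: $\mathbb{F}_q$ is the finite field of order $q=p^r$. For a projective $\mathbb{F}_q$-scheme $X$, $X(\mathbb{F}_q)$ denotes its set of $\mathbb{F}_q$-rational points. *)

From HB Require Import structures.
From mathcomp Require Import all_boot all_order all_algebra.
From mathcomp Require Import mpoly.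
Set Implicit Arguments. Unset Strict Implicit. Unset Printing Implicit Defensive.
Import Order.TTheory GRing.Theory.
Local Open Scope ring_scope.

Definition gpoly (R : ringType) (n q : nat) : {mpoly R[n.+1]} :=
  \sum_(i < n | ~~ odd i)
     ('X_(inord i) ^+ q * 'X_(inord i.+1) - 'X_(inord i) * 'X_(inord i.+1) ^+ q).

(* A projective point with coordinates in K: a nonzero vector (x_0,...,x_n). *)
Definition nonzero_vec (K : ringType) (m : nat) (x : 'I_m -> K) : Prop :=
  exists i, x i != 0.

Definition mirreducible (K : ringType) (m : nat) (h : {mpoly K[m]}) : Prop :=
  (1 < msize h)%N /\
  forall a b : {mpoly K[m]}, h = a * b -> (msize a <= 1)%N \/ (msize b <= 1)%N.

(* V(G) is irreducible (as a topological space, over K algebraically closed):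
   G is a nonzero scalar multiple of a power of an irreducible polynomial,
   i.e. the radical of (G) is a prime ideal. *)
Definition irreducible_hypersurface (K : ringType) (m : nat) (G : {mpoly K[m]}) : Prop :=
  exists (c : K) (h : {mpoly K[m]}) (k : nat),
    c != 0 /\ mirreducible h /\ (0 < k)%N /\ G = c *: h ^+ k.

(* V(G) in P^n_K is smooth (Jacobian criterion): no nonzero point of K^{n+1}
   where G and all partial derivatives of G vanish. *)
Definition smooth_hypersurface (K : ringType) (m : nat) (G : {mpoly K[m]}) : Prop :=
  forall x : 'I_m -> K, nonzero_vec x ->
    ~ (G.@[x] = 0 /\ forall i : 'I_m, (mderiv i G).@[x] = 0).

(* Every F_q-point has coordinates with a^q = a, so each summand of g vanishes
   on it.  Since q = 0 in characteristic p, the partial derivatives of g are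
   -x_{i+1}^q with respect to x_i and x_i^q with respect to x_{i+1} (i even),
   and they cannot all vanish at a nonzero point.
   For irreducibility, regard g as a polynomial in the last variable y:
   g = g' + x_{n-1}^q y - x_{n-1} y^q has leading coefficient -x_{n-1}, so in a
   factorisation g = a b one factor, say b, has a constant leading coefficient.
   Specialising the remaining variables to (t, 1, 0, ..., 0) with t^q <> t turns
   g into the nonzero constant t^q - t and keeps the degree of b in y, hence b
   has degree 0 in y and is a constant. *)

From HB Require Import structures.
From mathcomp Require Import all_boot all_order all_algebra fingroup cyclic finfield.
From mathcomp Require Import mpoly zify.
Import GRing.Theory.
Local Open Scope ring_scope.
Set Implicit Arguments. Unset Strict Implicit. Unset Printing Implicit Defensive.

Lemma map_gpoly (R S : comNzRingType) (f : {rmorphism R -> S}) n q :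
  map_mpoly f (gpoly R n q) = gpoly S n q.
Proof.
rewrite /gpoly rmorph_sum; apply: eq_bigr => i _.
by rewrite rmorphB !rmorphM !rmorphXn /= !map_mpolyX.
Qed.

Section GPoly.
Variables (R : comNzRingType) (n q : nat).

Lemma gpoly_eval (x : 'I_n.+1 -> R) :
  (gpoly R n q).@[x] = \sum_(i < n | ~~ odd i)
     (x (inord i) ^+ q * x (inord i.+1) - x (inord i) * x (inord i.+1) ^+ q).
Proof.
rewrite /gpoly raddf_sum; apply: eq_bigr => i _ /=.
by rewrite raddfB /= !mevalM !rmorphXn /= !mevalXU.
Qed.

Lemma gpoly_homog : gpoly R n q \is q.+1.-homog.
Proof.
have homX (i : 'I_n.+1) : ('X_i : {mpoly R[n.+1]}) \is 1.-homog.
  by rewrite dhomogX /= mdeg1.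
rewrite /gpoly; apply: rpred_sum => i _; apply: rpredB.
  by have := dhomogM (dhomogMn q (homX _)) (homX (inord i.+1)); rewrite mul1n addn1.
by have := dhomogM (homX (inord i)) (dhomogMn q (homX _)); rewrite mul1n add1n.
Qed.

End GPoly.

Lemma gpoly_eval_card (F : finFieldType) n (x : 'I_n.+1 -> F) :
  (gpoly F n #|F|).@[x] = 0.
Proof. by rewrite gpoly_eval big1 // => i _; rewrite !expf_card subrr. Qed.

Lemma mderiv_mpolyXU (R : comNzRingType) n (i j : 'I_n) :
  mderiv j ('X_i : {mpoly R[n]}) = (i == j)%:R.
Proof.
rewrite mderivX mnm1E; case: eqP => [->|_]; last by rewrite scale0r.
have -> : (U_(j) - U_(j) = 0)%MM by apply/mnmP => k; rewrite mnmBE subnn mnm0E.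
by rewrite mpolyX0 scale1r.
Qed.

Section Derivatives.
Variables (R : comNzRingType) (n q : nat).
Hypothesis q_eq0 : (q%:R : R) = 0.

Lemma mderiv_mpolyXUn (i j : 'I_n.+1) : mderiv j ('X_i ^+ q : {mpoly R[n.+1]}) = 0.
Proof. by rewrite mpolyXn mderivX mulmnE natrM q_eq0 mulr0 scale0r. Qed.

Lemma mderiv_gpoly j : (j <= n)%N ->
  mderiv (inord j) (gpoly R n q) = \sum_(i < n | ~~ odd i)
    ('X_(inord i) ^+ q *+ (i.+1 == j) - 'X_(inord i.+1) ^+ q *+ (i == j :> nat)).
Proof.
move=> le_jn; rewrite /gpoly raddf_sum; apply: eq_bigr => i _ /=.
have eq_inord k : (k <= n)%N -> ((inord k : 'I_n.+1) == inord j) = (k == j).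
  by move=> le_kn; rewrite -val_eqE /= !inordK.
rewrite mderivB !mderivM !mderiv_mpolyXUn !mderiv_mpolyXU mul0r mulr0 add0r addr0.
by rewrite !eq_inord ?(ltnW (ltn_ord i)) // mulr_natr mulr_natl; congr (_ - _).
Qed.

Lemma mderiv_gpoly_odd (i : 'I_n) : ~~ odd i ->
  mderiv (inord i.+1) (gpoly R n q) = 'X_(inord i) ^+ q.
Proof.
move=> ev_i; rewrite mderiv_gpoly // (bigD1 i) //= big1 => [|k /andP[ev_k ne_ki]].
  by rewrite eqxx (ltn_eqF (ltnSn i)) mulr1n mulr0n subr0 addr0.
rewrite eqSS val_eqE (negbTE ne_ki) mulr0n sub0r.
case: eqP => [ek|_]; last by rewrite mulr0n oppr0.
by exfalso; move: ev_k; rewrite ek oddS ev_i.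
Qed.

Lemma mderiv_gpoly_even (i : 'I_n) : ~~ odd i ->
  mderiv (inord i) (gpoly R n q) = - 'X_(inord i.+1) ^+ q.
Proof.
move=> ev_i; rewrite mderiv_gpoly ?(ltnW (ltn_ord i)) //.
rewrite (bigD1 i) //= big1 => [|k /andP[ev_k ne_ki]].
  by rewrite eqxx (gtn_eqF (ltnSn i)) mulr1n mulr0n sub0r addr0.
rewrite val_eqE (negbTE ne_ki) mulr0n subr0.
case: eqP => [ek|_]; last by rewrite mulr0n.
by exfalso; move: ev_i; rewrite -ek oddS ev_k.
Qed.

End Derivatives.

Lemma gpoly_smooth (L : idomainType) n q : odd n -> (q%:R : L) = 0 ->
  smooth_hypersurface (gpoly L n q).
Proof.
move=> odd_n q_eq0 x [k xk_neq0] [_ dG0].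
have xkq_neq0 : x k ^+ q != 0 by rewrite expf_neq0.
have [odd_k | ev_k] := boolP (odd k).
  have lt_k1n : (k.-1 < n)%N by rewrite -ltnS prednK ?ltn_ord // odd_gt0.
  have ev_k1 : ~~ odd (Ordinal lt_k1n) by rewrite /= -oddS prednK ?odd_gt0.
  have := dG0 (inord (Ordinal lt_k1n)); rewrite mderiv_gpoly_even //=.
  rewrite prednK ?odd_gt0 // inord_val rmorphN rmorphXn /= mevalXU.
  by move/eqP; rewrite oppr_eq0 (negbTE xkq_neq0).
have lt_kn : (k < n)%N.
  by rewrite ltn_neqAle -ltnS ltn_ord andbT; apply: contraNneq ev_k => ->.
have := dG0 (inord (Ordinal lt_kn).+1); rewrite mderiv_gpoly_odd //= inord_val.
by rewrite rmorphXn /= mevalXU; apply/eqP.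
Qed.

Lemma mpoly_rmorph_id (R : comNzRingType) n
    (psi : {rmorphism {mpoly R[n]} -> {mpoly R[n]}}) :
  (forall c, psi c%:MP = c%:MP) -> (forall i, psi 'X_i = 'X_i) -> psi =1 id.
Proof.
move=> psiC psiX p; rewrite [in LHS](mpolyE p) raddf_sum [in RHS](mpolyE p).
apply: eq_bigr => m _.
transitivity (psi (p@_m)%:MP * psi 'X_[m]); first by rewrite -rmorphM mul_mpolyC.
rewrite psiC mpolyXE_id rmorph_prod -mul_mpolyC.
by under eq_bigr => i _ do rewrite rmorphXn psiX.
Qed.

Section Muni.
Variables (R : comNzRingType) (n : nat).

Lemma muniX_widen (j : 'I_n) :
  muni ('X_(widen_ord (leqnSn n) j) : {mpoly R[n.+1]}) = ('X_j)%:P.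
Proof.
rewrite muniE msuppX big_seq1 mcoeffX eqxx scale1r mnm1E.
have -> : [multinom (U_(widen_ord (leqnSn n) j)%MM : 'X_{1..n.+1})
                     (widen_ord (leqnSn n) i) | i < n] = U_(j)%MM by apply/mnmP => i; rewrite mnmE !mnm1E.
by rewrite -val_eqE /= ltn_eqF // expr0 alg_polyC.
Qed.

Lemma muniX_max : muni ('X_ord_max : {mpoly R[n.+1]}) = 'X.
Proof.
rewrite muniE msuppX big_seq1 mcoeffX eqxx scale1r mnm1E eqxx expr1.
have -> : [multinom (U_(@ord_max n)%MM : 'X_{1..n.+1}) (widen_ord (leqnSn n) i)
          | i < n] = 0%MM.
  by apply/mnmP => i; rewrite mnmE mnm1E mnm0E -val_eqE /= gtn_eqF.
by rewrite mpolyX0 scale1r.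
Qed.

Lemma muni_inj : injective (@muni n R).
Proof.
pose rho := horner_eval ('X_ord_max : {mpoly R[n.+1]}) \o map_poly (@mwiden n R).
suff muniK : cancel (@muni n R) rho by apply: can_inj muniK.
apply: (@mpoly_rmorph_id _ _
  (horner_eval ('X_ord_max : {mpoly R[n.+1]}) \o map_poly (@mwiden n R) \o @muni n R)).
  by move=> c /=; rewrite muniC map_polyC /horner_eval hornerC; apply: mwidenC.
move=> i /=; have [j ->|->] := unliftP ord_max i; last first.
  by rewrite muniX_max map_polyX /horner_eval hornerX.
have -> : lift ord_max j = widen_ord (leqnSn n) j.
  by apply: val_inj; rewrite /= /bump leqNgt ltn_ord.
rewrite muniX_widen map_polyC /horner_eval hornerC.
by rewrite /= mwidenX mnmwiden1.
Qed.

End Muni.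

Lemma muni_gpoly (R : comNzRingType) n q : ~~ odd n ->
  muni (gpoly R n.+1 q) = (gpoly R n q)%:P +
    (('X_ord_max ^+ q)%:P * 'X - ('X_ord_max)%:P * 'X ^+ q).
Proof.
move=> ev_n; rewrite /gpoly big_mkcond big_ord_recr /= -big_mkcond /= ev_n.
have inord_widen i : (i <= n)%N ->
    (inord i : 'I_n.+2) = widen_ord (leqnSn n.+1) (inord i : 'I_n.+1).
  by move=> le_in; apply: val_inj; rewrite /= !inordK // ltnS ?(leqW le_in).
rewrite rmorphD !rmorph_sum /=; congr (_ + _).
  apply: eq_bigr => i _.
  rewrite !(inord_widen _ (ltnW (ltn_ord i))) (inord_widen _ (ltn_ord i)).
  by rewrite rmorphB !rmorphM !rmorphXn /= !muniX_widen polyCB !polyCM !rmorphXn.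
have -> : (inord n : 'I_n.+2) = widen_ord (leqnSn n.+1) ord_max.
  by apply: val_inj; rewrite /= inordK.
have -> : (inord n.+1 : 'I_n.+2) = ord_max by apply: val_inj; rewrite /= inordK.
by rewrite rmorphB !rmorphM !rmorphXn /= muniX_widen muniX_max.
Qed.

Definition point01 (R : nzRingType) m (t : R) : 'I_m -> R :=
  fun i => if nat_of_ord i == 0%N then t else (nat_of_ord i == 1%N)%:R.

Lemma gpoly_eval_point01 (R : comNzRingType) n q (t : R) : (0 < n)%N ->
  (gpoly R n q).@[point01 t] = t ^+ q - t.
Proof.
move=> n_gt0; rewrite gpoly_eval (bigD1 (Ordinal n_gt0)) //=.
rewrite big1 => [|i /andP[ev_i ne_i0]].
  by rewrite /point01 !inordK ?ltnS // expr1n !mulr1 addr0.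
have i_ge2 : (2 <= i)%N.
  by move: ev_i ne_i0; rewrite -val_eqE /=; case: (nat_of_ord i) => [|[|]].
rewrite /point01 !inordK ?ltnS ?(ltnW (ltn_ord i)) ?ltn_ord //.
rewrite !gtn_eqF ?ltnS ?(ltnW i_ge2) // -[false%:R]/(0 : R).
by rewrite mulr0 mul0r subrr.
Qed.

Lemma dhomog_msize_gt (R : nzRingType) m d (p : {mpoly R[m]}) :
  p != 0 -> p \is d.-homog -> (d < msize p)%N.
Proof.
by move=> p_neq0 homp; rewrite -mlead_deg // (dhomog_mf homp) ?mlead_supp.
Qed.

Lemma msizeM_eq2 (R : idomainType) m (u v : {mpoly R[m]}) :
  msize (u * v) = 2 -> (msize u == 1%N) || (msize v == 1%N).
Proof.
have [->|u_neq0] := eqVneq u 0; first by rewrite mul0r msize0.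
have [->|v_neq0] := eqVneq v 0; first by rewrite mulr0 msize0.
move: u_neq0 v_neq0; rewrite -!msize_poly_eq0 => u_neq0 v_neq0.
rewrite msizeM -?msize_poly_eq0 //; lia.
Qed.

Lemma size_map_polyM_le1 (A B : idomainType) (phi : {rmorphism A -> B})
    (a b : {poly A}) :
  size (map_poly phi (a * b)) = 1%N -> phi (lead_coef b) != 0 -> (size b <= 1)%N.
Proof.
move=> size_ab lb_neq0; rewrite -(size_map_poly_id0 lb_neq0).
move: size_ab; rewrite rmorphM /=.
have [->|a_neq0] := eqVneq (map_poly phi a) 0; first by rewrite mul0r size_poly0.
have [->|b_neq0] := eqVneq (map_poly phi b) 0; first by rewrite size_poly0.
rewrite size_mul //; move: a_neq0 b_neq0; rewrite -!size_poly_eq0.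
case: (size (map_poly phi a)) => [|[|sa]] // _;
  case: (size (map_poly phi b)) => [|[|sb]] //.
by rewrite addnS.
Qed.

Section Irreducibility.
Variables (L : idomainType) (n q : nat).
Hypotheses (ev_n : ~~ odd n) (gt1_q : (1 < q)%N).

Lemma lead_coef_muni_gpoly : lead_coef (muni (gpoly L n.+1 q)) = - 'X_ord_max.
Proof.
have X_neq0 : ('X_ord_max : {mpoly L[n.+1]}) != 0.
  by rewrite -msize_poly_eq0 msizeX mdeg1.
rewrite muni_gpoly // addrA -mulNr -polyCN !mul_polyC.
rewrite lead_coefDr ?lead_coefZ ?lead_coefXn ?mulr1 //.
rewrite size_scale ?oppr_eq0 // size_polyXn ltnS (leq_trans (size_polyD _ _)) //.
rewrite geq_max (leq_trans (size_polyC_leq1 _)) ?(ltnW gt1_q) //.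
by rewrite (leq_trans (size_scale_leq _ _)) ?size_polyX.
Qed.

Lemma gpoly_neq0 : gpoly L n.+1 q != 0.
Proof.
apply: contraTneq isT => G0; have := lead_coef_muni_gpoly.
by rewrite G0 rmorph0 lead_coef0 => /eqP; rewrite eq_sym oppr_eq0 -msize_poly_eq0 msizeX.
Qed.

Lemma map_muni_gpoly_point01 (t : L) : (2 <= n)%N ->
  map_poly (meval (point01 t)) (muni (gpoly L n.+1 q)) = (t ^+ q - t)%:P.
Proof.
move=> n_ge2; have X0 : meval (point01 t) ('X_ord_max : {mpoly L[n.+1]}) = 0.
  by rewrite mevalXU /point01 /= !gtn_eqF // ?(ltnW n_ge2).
rewrite muni_gpoly // rmorphD rmorphB !rmorphM /= !map_polyC map_polyX map_polyXn.
rewrite /= rmorphXn /= X0 expr0n gtn_eqF ?(ltnW gt1_q) // !mul0r subrr addr0.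
by rewrite gpoly_eval_point01 // (leq_trans _ n_ge2).
Qed.

Lemma gpoly_irreducible (t : L) : (2 <= n)%N -> t ^+ q != t ->
  mirreducible (gpoly L n.+1 q).
Proof.
move=> n_ge2 tq_neq_t; split.
  exact: leq_ltn_trans (ltn0Sn q) (dhomog_msize_gt gpoly_neq0 (gpoly_homog _ _ _)).
have unit_factor u v : muni u * muni v = muni (gpoly L n.+1 q) ->
    msize (lead_coef (muni v)) = 1%N -> (msize v <= 1)%N.
  move=> uvG /eqP/msize_poly1P[c c_neq0 lc].
  have /size1_polyC v_const : (size (muni v) <= 1)%N.
    apply: (@size_map_polyM_le1 _ _ (meval (point01 t)) (muni u)).
      by rewrite uvG map_muni_gpoly_point01 // size_polyC subr_eq0 tq_neq_t.
    by rewrite lc /= mevalC.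
  rewrite v_const lead_coefC in lc.
  have -> : v = c%:MP by apply: muni_inj; rewrite v_const lc muniC; congr _%:P.
  by rewrite mmeasureC leq_b1.
move=> a b Gab.
have muniG : muni a * muni b = muni (gpoly L n.+1 q) by rewrite Gab rmorphM.
have := lead_coef_muni_gpoly; rewrite -muniG lead_coefM => /(congr1 (mmeasure mdeg)).
rewrite mmeasureN msizeX mdeg1 => /msizeM_eq2 /orP[/eqP lead1 | /eqP lead1].
  by left; apply: (unit_factor b) lead1; rewrite mulrC.
by right; apply: (unit_factor a) lead1.
Qed.

End Irreducibility.

Lemma natr_card_finField (F : finFieldType) : (#|F|%:R : F) = 0.
Proof. by rewrite -cardsT -FinRing.zmodXgE expg_cardG ?inE. Qed.

Lemma closed_exists_exprn_neq (L : closedFieldType) q : (1 < q)%N ->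
  exists t : L, t ^+ q != t.
Proof.
case: q => [|[|q]] // _.
(* a root of X^q - X - 1 *)
have [t ht] := @solve_monicpoly L q.+2 (fun i => ((i <= 1)%N)%:R) isT.
exists t; rewrite ht !big_ord_recl big1 => [|i _] /=; last by rewrite mul0r.
by rewrite !mul1r expr0 expr1 addr0 -subr_eq0 addrK oner_neq0.
Qed.

Theorem mainTheorem6 (F : finFieldType) (n : nat) :
  odd n ->
  let q := #|F| in
  let g := gpoly F n q in
  (g != 0 /\ g \is (q.+1).-homog) /\
  (forall (L : closedFieldType) (f : {rmorphism F -> L}),
      smooth_hypersurface (map_mpoly f g)) /\
  (forall x : 'I_n.+1 -> F, nonzero_vec x -> g.@[x] = 0) /\
  ((3 <= n)%N ->
    forall (L : closedFieldType) (f : {rmorphism F -> L}),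
      irreducible_hypersurface (map_mpoly f g)).
Proof.
case: n => [|n] // odd_n q g; have gt1_q : (1 < q)%N := finNzRing_gt1 F.
split; first by split; [exact: gpoly_neq0 | exact: gpoly_homog].
split.
  move=> L f; rewrite /g map_gpoly; apply: gpoly_smooth => //.
  by rewrite -(rmorph_nat f) natr_card_finField rmorph0.
split; first by move=> x _; exact: gpoly_eval_card.
move=> ge3_n L f; have [t tq_neq_t] := closed_exists_exprn_neq L gt1_q.
exists 1, (map_mpoly f g), 1%N; rewrite oner_neq0 expr1 scale1r /g map_gpoly.
by split=> //; split=> //; exact: gpoly_irreducible tq_neq_t.
Qed.
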